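(* Let $k, \ell \in \mathbb{N}$. Then $|\mathcal{J}(k,\ell)_n| = O(n^{k-1}F_{n,\ell})$ as $n \to \infty$, where $\mathcal{J}(k,\ell)_n$ is the set of members of $\mathcal{J}(k,\ell)$ with vertex set $[n]$.
   Context: Ordered graphs of order $n$ have vertex set $[n]$ with natural order; $A\leqslant B$ means $A$ is an induced ordered subgraph of $B$ (via an injective order-preserving map preserving adjacency and non-adjacency). $G_1+\dots+G_m$ places copies of $G_1,\dots,G_m$ consecutively from left to right with no edges between copies. For $n\in\mathbb{N}$: $J^{(n)}_1=K_n$; $J^{(n)}_2$ on $[n]$ with edge set $\{1n\}$ if $n\geqslant2$ (empty if $n=1$); $J^{(n)}_3$ on $[n]$ with edges $\{1i: 2\leqslant i\leqslant n\}$; $J^{(n)}_4$ on $[n]$ with edges $\{in: 1\leqslant i\leqslant n-1\}$; $L^{(n)}$ on $[n]$ with edges $\{i(i+1): 1\leqslant i\leqslant n-1\}$; $Q_1$ on $[4]$ with edges $\{13,24\}$; $Q_2$ on $[4]$ with edges $\{14,23\}$. For $\ell\in\{1,2,3\}$, $\mathcal{J}_\ell=\{J^{(n)}_i: i\in[4], n\leqslant\ell\}\cup\{L^{(n)}: n\leqslant\ell\}$; for $\ell\geqslant4$, $\mathcal{J}_\ell$ is this set together with $Q_1,Q_2$. An ordered graph $G$ is in $\mathcal{J}(k,\ell)$ iff there are $s\leqslant k$ ordered graphs $A_1,\dots,A_s$ with $G=A_1+\dots+A_s$ such that each $A_i=B^{(i)}_1+\dots+B^{(i)}_{t(i)}$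 with all $B^{(i)}_j\in\mathcal{J}_\ell$ and, for every pair $j,j'$, $B^{(i)}_j\leqslant B^{(i)}_{j'}$ or $B^{(i)}_{j'}\leqslant B^{(i)}_j$. $F_{n,\ell}$: $F_{n,\ell}=0$ for $n<0$, $F_{0,\ell}=1$, $F_{n,\ell}=F_{n-1,\ell}+\dots+F_{n-\ell,\ell}$ for $n\geqslant1$. *)

From mathcomp Require Import all_boot.
From mathcomp Require Import boolp.
Set Implicit Arguments. Unset Strict Implicit. Unset Printing Implicit Defensive.

(* An ordered graph of order [ord] on vertices {0,..,ord-1} (vertex i here is
   vertex i+1 of the paper).  Adjacency of i < j < ord is [oe i j]; values of
   [oe] outside { (i,j) | i < j < ord } are irrelevant. *)
Record OG := MkOG { ord : nat; oe : nat -> nat -> bool }.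

Definition og_eq (G H : OG) : Prop :=
  ord G = ord H /\ forall i j, i < j -> j < ord G -> oe G i j = oe H i j.

Definition og_le (A B : OG) : Prop :=
  exists f : nat -> nat,
    (forall i j, i < j -> j < ord A -> f i < f j) /\
    (forall i, i < ord A -> f i < ord B) /\
    (forall i j, i < j -> j < ord A -> oe A i j = oe B (f i) (f j)).

Definition og_cat (A B : OG) : OG :=
  MkOG (ord A + ord B)
       (fun i j => if j < ord A then oe A i j
                   else if ord A <= i then oe B (i - ord A) (j - ord A)
                   else false).

Definition og_empty : OG := MkOG 0 (fun _ _ => false).

Definition og_sum (s : seq OG) : OG := foldr og_cat og_empty s.

Definition J1 (n : nat) : OG := MkOG n (fun _ _ => true).
Definition J2 (n : nat) : OG := MkOG n (fun i j => (i == 0) && (j == n.-1)).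
Definition J3 (n : nat) : OG := MkOG n (fun i _ => i == 0).
Definition J4 (n : nat) : OG := MkOG n (fun _ j => j == n.-1).
Definition Lpath (n : nat) : OG := MkOG n (fun i j => j == i.+1).
Definition Q1 : OG := MkOG 4 (fun i j => ((i == 0) && (j == 2)) || ((i == 1) && (j == 3))).
Definition Q2 : OG := MkOG 4 (fun i j => ((i == 0) && (j == 3)) || ((i == 1) && (j == 2))).

Definition inJfam (l : nat) (B : OG) : Prop :=
  (exists n, 1 <= n /\ n <= l /\
     (og_eq B (J1 n) \/ og_eq B (J2 n) \/ og_eq B (J3 n) \/ og_eq B (J4 n)
      \/ og_eq B (Lpath n)))
  \/ (4 <= l /\ (og_eq B Q1 \/ og_eq B Q2)).

Definition good_blocks (l : nat) (Bs : seq OG) : Prop :=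
  (forall j, j < size Bs -> inJfam l (nth og_empty Bs j)) /\
  (forall j j', j < size Bs -> j' < size Bs ->
     og_le (nth og_empty Bs j) (nth og_empty Bs j') \/
     og_le (nth og_empty Bs j') (nth og_empty Bs j)).

Definition inJkl (k l : nat) (G : OG) : Prop :=
  exists As : seq (seq OG),
    size As <= k /\
    (forall i, i < size As -> good_blocks l (nth [::] As i)) /\
    og_eq G (og_sum [seq og_sum Bs | Bs <- As]).

Definition og_of_set (n : nat) (E : {set 'I_n * 'I_n}) : OG :=
  MkOG n (fun i j => [exists p in E, (nat_of_ord p.1 == i) && (nat_of_ord p.2 == j)]).

Definition upper_pairs (n : nat) : {set 'I_n * 'I_n} :=
  [set p : 'I_n * 'I_n | nat_of_ord p.1 < nat_of_ord p.2].

Definition numJ (k l n : nat) : nat :=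
  #|[set E : {set 'I_n * 'I_n} |
      (E \subset upper_pairs n) && `[< inJkl k l (og_of_set E) >] ]|.

(* F_{n,l}: F_{n} = 0 for n<0, F_0 = 1, F_n = F_{n-1} + ... + F_{n-l}.
   Computed with fuel (fuel >= n suffices). *)
Fixpoint Faux (l fuel n : nat) : nat :=
  match fuel with
  | 0 => 1
  | fuel'.+1 =>
      if n is 0 then 1
      else \sum_(1 <= i < l.+1 | i <= n) Faux l fuel' (n - i)
  end.

Definition Fnl (n l : nat) : nat := Faux l n n.

Lemma Fnl_sanity : [:: Fnl 0 2; Fnl 1 2; Fnl 2 2; Fnl 3 2; Fnl 4 2; Fnl 5 2; Fnl 4 3]
                   = [:: 1; 1; 2; 3; 5; 8; 7].
Proof. rewrite /Fnl /=. by rewrite !unlock. Qed.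

From mathcomp Require Import all_boot boolp zify.
Set Implicit Arguments. Unset Strict Implicit. Unset Printing Implicit Defensive.

(** A member of J(k,l)_n is determined by three pieces of data: the orders of
   its blocks read from left to right, a composition of n into parts at most l
   (F_{n,l} choices); the numbers of blocks in the first k-1 columns (at most
   (n+1)^(k-1) choices); and, for every column and every order m <= l, which of
   the seven basic graphs its blocks of order m are (at most 7^((l+1)k)
   choices).  The last datum is well defined because blocks of one column are
   pairwise comparable, and an embedding between ordered graphs of the same
   order is the identity. *)

Lemma og_eq_refl G : og_eq G G.
Proof. by split. Qed.

Lemma og_eq_sym G H : og_eq G H -> og_eq H G.
Proof. by move=> [e h]; split=> // i j ij jn; rewrite h // e. Qed.

Lemma og_eq_trans G H K : og_eq G H -> og_eq H K -> og_eq G K.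
Proof.
move=> [e1 h1] [e2 h2]; split; first by rewrite e1.
by move=> i j ij jn; rewrite h1 // h2 // -e1.
Qed.

Lemma og_eq_cat A A' B B' :
  og_eq A A' -> og_eq B B' -> og_eq (og_cat A B) (og_cat A' B').
Proof.
move=> [eA hA] [eB hB]; split=> [|i j ij /= jn]; first by rewrite /= eA eB.
rewrite -eA; case: ifP => jA; first by rewrite hA.
by case: ifP => // iA; rewrite hB //; lia.
Qed.

Lemma og_eq_sum_map (T : Type) (x0 : T) (f g : T -> OG) s :
  (forall i, i < size s -> og_eq (f (nth x0 s i)) (g (nth x0 s i))) ->
  og_eq (og_sum (map f s)) (og_sum (map g s)).
Proof.
elim: s => [|x s IHs] fg /=; first exact: og_eq_refl.
apply: og_eq_cat; first exact: (fg 0).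
by apply: IHs => i; apply: (fg i.+1).
Qed.

Lemma og_sum_cat_empty s j : og_eq (og_sum (s ++ nseq j og_empty)) (og_sum s).
Proof.
elim: s => [|x s IHs] /=; last exact: og_eq_cat (og_eq_refl x) IHs.
elim: j => [|j IHj] /=; first exact: og_eq_refl.
apply: og_eq_trans IHj; split=> //= i j' _ _; by rewrite !subn0.
Qed.

Lemma ord_og_sum s : ord (og_sum s) = sumn (map ord s).
Proof. by elim: s => //= x s ->. Qed.

Lemma strict_incr_bounded_id n (f : nat -> nat) :
  (forall i j, i < j -> j < n -> f i < f j) -> (forall i, i < n -> f i < n) ->
  forall i, i < n -> f i = i.
Proof.
move=> incr bounded.
have shift d i : i + d < n -> f i + d <= f (i + d).
  elim: d => [|d IHd] lt; first by rewrite !addn0.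
  have := incr (i + d) (i + d.+1); have := IHd; lia.
move=> i lt; have := shift i 0; rewrite add0n => /(_ lt).
have := shift (n.-1 - i) i; rewrite subnKC; last lia.
have := bounded n.-1; lia.
Qed.

Lemma og_le_eq A B : og_le A B -> ord A = ord B -> og_eq A B.
Proof.
move=> [f [incr [bounded adj]]] eAB; split=> // i j ij jA.
rewrite -eAB in bounded; have fid := strict_incr_bounded_id incr bounded.
by rewrite adj // !fid //; apply: ltn_trans jA.
Qed.

Definition basic_graph (t m : nat) : OG :=
  match t with
  | 0 => J1 m | 1 => J2 m | 2 => J3 m | 3 => J4 m | 4 => Lpath m | 5 => Q1 | _ => Q2
  end.

Definition basic_type (B : OG) : 'I_7 :=
  odflt ord0 [pick t : 'I_7 | `[< og_eq B (basic_graph t (ord B)) >]].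

Lemma inJfam_ord l B : inJfam l B -> 0 < ord B <= l.
Proof.
case=> [[n [n1 [nl h]]]|[l4 h]].
  by case: h => [[e _]|[[e _]|[[e _]|[[e _]|[e _]]]]]; rewrite e n1.
by case: h => [[e _]|[e _]]; rewrite e /=; lia.
Qed.

Lemma inJfam_basic_type l B :
  inJfam l B -> og_eq B (basic_graph (basic_type B) (ord B)).
Proof.
move=> hB; rewrite /basic_type; case: pickP => [t /asboolP //|not_basic].
suff [t /asboolP] : exists t : 'I_7, og_eq B (basic_graph t (ord B)).
  by rewrite not_basic.
case: hB => [[n [_ [_ h]]]|[_ h]].
  case: h => h; last case: h => h; last case: h => h; last case: h => h;
    rewrite (proj1 h).
  - by exists (@Ordinal 7 0 isT).
  - by exists (@Ordinal 7 1 isT).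
  - by exists (@Ordinal 7 2 isT).
  - by exists (@Ordinal 7 3 isT).
  - by exists (@Ordinal 7 4 isT).
case: h => h; first by exists (@Ordinal 7 5 isT).
by exists (@Ordinal 7 6 isT).
Qed.

Definition column_type l (Bs : seq OG) : (l.+1).-tuple 'I_7 :=
  [tuple basic_type (nth og_empty Bs (find (fun B => ord B == m) Bs)) | m < l.+1].

Lemma good_blocks_column_type l Bs j : good_blocks l Bs -> j < size Bs ->
  let B := nth og_empty Bs j in
  og_eq B (basic_graph (nth ord0 (column_type l Bs) (ord B)) (ord B)).
Proof.
move=> [inJ comparable] jBs B.
have /andP[_ Bl] := inJfam_ord (inJ j jBs).
rewrite -[ord B]/(nat_of_ord (Ordinal (Bl : ord B < l.+1))) nth_mktuple /=.
set j0 := find _ Bs.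
have hasB : has (fun B' => ord B' == ord B) Bs.
  by apply/(has_nthP og_empty); exists j.
have j0Bs : j0 < size Bs by rewrite -has_find.
have /eqP ordB0 := nth_find og_empty hasB.
apply: (@og_eq_trans _ (nth og_empty Bs j0)).
  case: (comparable j j0 jBs j0Bs) => le; first exact: og_le_eq le (esym ordB0).
  exact: og_eq_sym (og_le_eq le ordB0).
by rewrite -ordB0; apply: inJfam_basic_type (inJ j0 j0Bs).
Qed.

Lemma mem_leq_sumn s x : x \in s -> x <= sumn s.
Proof. by elim: s => //= y s IHs; rewrite inE => /orP[/eqP->|/IHs]; lia. Qed.

Lemma size_leq_sumn s : {in s, forall x, 0 < x} -> size s <= sumn s.
Proof.
move=> pos; rewrite sumnE -sum1_size big_seq [X in _ <= X]big_seq.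
exact: leq_sum.
Qed.

Fixpoint compositions (l fuel n : nat) : seq (seq nat) :=
  if fuel is fuel'.+1 then
    if n is 0 then [:: [::]]
    else [seq i :: c | i <- [seq i <- iota 1 l | i <= n],
                       c <- compositions l fuel' (n - i)]
  else [:: [::]].

Lemma size_compositions l fuel n : size (compositions l fuel n) = Faux l fuel n.
Proof.
elim: fuel n => [|fuel IHfuel] [|n] //=.
rewrite size_allpairs_dep sumnE big_map big_filter /index_iota subn1 /=.
by apply: eq_bigr => i _; rewrite IHfuel.
Qed.

Lemma mem_compositions l fuel n c : n <= fuel -> sumn c = n ->
  {in c, forall x, 0 < x <= l} -> c \in compositions l fuel n.
Proof.
elim: fuel n c => [|fuel IHfuel] n [|x c] //=; try by case: n.
  by rewrite leqn0 => /eqP-> sum_xc /(_ x (mem_head _ _)); lia.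
move=> le_n sum_xc parts; have /andP[x0 xl] := parts x (mem_head _ _).
case: n le_n sum_xc => [|n] le_n sum_xc; first lia.
apply: (allpairs_f_dep (fun i c => i :: c)); first by rewrite mem_filter mem_iota; lia.
apply: IHfuel; [lia | lia | by move=> y yc; apply: parts; rewrite inE yc orbT].
Qed.

Definition column_graph (col : seq nat) (ty : seq 'I_7) : OG :=
  og_sum [seq basic_graph (nth ord0 ty m) m | m <- col].

Definition columns_graph l (cols : seq (seq nat)) (tys : seq ((l.+1).-tuple 'I_7))
    : OG :=
  og_sum [seq column_graph ct.1 ct.2
         | ct : seq nat * (l.+1).-tuple 'I_7 <- zip cols tys].

Lemma og_sum_good_columns l As :
  (forall i, i < size As -> good_blocks l (nth [::] As i)) ->
  og_eq (og_sum (map og_sum As))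
        (columns_graph (map (map ord) As) (map (column_type l) As)).
Proof.
move=> good; rewrite /columns_graph zip_map -map_comp.
apply: (@og_eq_sum_map _ [::] og_sum) => i iAs /=.
rewrite /column_graph -map_comp -[X in og_sum X]map_id.
apply: (@og_eq_sum_map _ og_empty id) => j jBs.
exact: good_blocks_column_type (good i iAs) jBs.
Qed.

Definition edge_set n (G : OG) : {set 'I_n * 'I_n} :=
  [set p : 'I_n * 'I_n | (p.1 < p.2) && oe G p.1 p.2].

Lemma og_of_setK n (E : {set 'I_n * 'I_n}) G :
  E \subset upper_pairs n -> og_eq (og_of_set E) G -> E = edge_set n G.
Proof.
move=> /subsetP upper [_ eqG]; apply/setP => [[i j]]; rewrite inE /=.
case: (ltnP i j) => ij /=; last first.
  by apply/negbTE; apply: contraL ij => /upper; rewrite inE -ltnNge.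
rewrite -eqG //=; apply/idP/existsP => [ijE | [[i' j'] /and3P[ijE' /eqP ei /eqP ej]]].
  by exists (i, j); rewrite ijE !eqxx.
by rewrite -(val_inj ei) -(val_inj ej).
Qed.

Lemma inJkl_columns k l G : 0 < k -> inJkl k l G ->
  exists As : seq (seq OG),
    [/\ size As = k, forall i, i < size As -> good_blocks l (nth [::] As i)
      & og_eq G (og_sum (map og_sum As))].
Proof.
move=> k0 [As [le_k [good eqG]]].
exists (As ++ nseq (k - size As) [::]); split.
- by rewrite size_cat size_nseq; lia.
- move=> i _; rewrite nth_cat nth_nseq; case: ifP => [/good //|_].
  by case: ifP => _; split.
- rewrite map_cat map_nseq.
  exact: og_eq_trans eqG (og_eq_sym (og_sum_cat_empty _ _)).
Qed.

Definition code_data k l n : finType :=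
  ((k.-1).-tuple 'I_n.+1 * k.-tuple ((l.+1).-tuple 'I_7))%type.

Definition decode k l n (c : seq nat * code_data k l n) : {set 'I_n * 'I_n} :=
  let: (comp, (cuts, tys)) := c in
  let sh := map val cuts in
  edge_set n (columns_graph (reshape (rcons sh (size comp - sumn sh)) comp) tys).

Definition codes k l n : seq (seq nat * code_data k l n) :=
  [seq (comp, d) | comp <- compositions l n n, d <- enum (code_data k l n)].

Lemma size_codes k l n :
  size (codes k l n) = Fnl n l * (n.+1 ^ k.-1 * (7 ^ l.+1) ^ k).
Proof.
by rewrite size_allpairs size_compositions -cardE card_prod !card_tuple !card_ord.
Qed.

Lemma inJkl_decode k l n (E : {set 'I_n * 'I_n}) :
  0 < k -> E \subset upper_pairs n -> inJkl k l (og_of_set E) ->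
  exists2 c, c \in codes k l n & E = decode c.
Proof.
move=> k0 upper inJ; have [As [sizeAs good eqAs]] := inJkl_columns k0 inJ.
have eqG := og_eq_trans eqAs (og_sum_good_columns good).
set cols := map (map ord) As in eqG.
have parts : {in flatten cols, forall x, 0 < x <= l}.
  move=> x /flattenP[col /(nthP [::])[i]]; rewrite size_map => iAs <- /(nthP 0)[j].
  rewrite (nth_map [::]) // size_map => jBs <-; rewrite (nth_map og_empty) //.
  exact: inJfam_ord ((good i iAs).1 j jBs).
have sum_cols : sumn (flatten cols) = n.
  have := proj1 eqAs; rewrite /= ord_og_sum sumn_flatten -!map_comp => ->.
  by congr sumn; apply: eq_map => Bs /=; rewrite ord_og_sum.
have [cols' [c def_cols]] : exists cols' c, cols = rcons cols' c.
  have : size cols = k by rewrite size_map.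
  case: (cols) => [|c0 cs] /=; first lia.
  by exists (belast c0 cs), (last c0 cs); rewrite lastI.
have size_cols' : size (shape cols') = k.-1.
  by rewrite size_map -[k]sizeAs -(size_map (map ord)) -/cols def_cols size_rcons.
have cuts_le : {in shape cols', forall x, x < n.+1}.
  move=> x /mem_leq_sumn; rewrite ltnS -size_flatten -sum_cols => /leq_trans; apply.
  apply: leq_trans (size_leq_sumn _); last by move=> y /parts /andP[].
  by rewrite def_cols flatten_rcons size_cat leq_addr.
pose cuts := tcast (etrans (size_map _ _) size_cols')
                  (in_tuple (map (@inord n) (shape cols'))).
pose tys := tcast (etrans (size_map _ _) sizeAs)
                  (in_tuple (map (column_type l) As)).
exists (flatten cols, (cuts, tys)).
  apply: allpairs_f; last by rewrite mem_enum.
  by apply: mem_compositions => //; rewrite sum_cols.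
have val_cuts : map val cuts = shape cols'.
  by rewrite val_tcast -map_comp; apply: map_id_in => x /cuts_le /= /inordK.
rewrite /decode val_cuts val_tcast def_cols flatten_rcons size_cat size_flatten addKn.
by rewrite -flatten_rcons -map_rcons flattenK -def_cols; apply: og_of_setK.
Qed.

Lemma numJ_le_size_codes k l n : 0 < k -> numJ k l n <= size (codes k l n).
Proof.
move=> k0; rewrite -(size_map (@decode k l n)) /numJ.
apply: leq_trans (card_size _); apply: subset_leq_card; apply/subsetP => E.
by rewrite inE => /andP[upper /asboolP/(inJkl_decode k0 upper)[c cs ->]]; apply: map_f.
Qed.

Theorem lemma26 (k l : nat) (hk : 1 <= k) (hl : 1 <= l) :
  exists C N : nat, forall n : nat, N <= n ->
    numJ k l n <= C * n ^ (k - 1) * Fnl n l.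
Proof.
exists (2 ^ (k - 1) * (7 ^ l.+1) ^ k), 1 => n n1.
apply: leq_trans (numJ_le_size_codes l n hk) _; rewrite size_codes -subn1.
have le_pow : n.+1 ^ (k - 1) <= 2 ^ (k - 1) * n ^ (k - 1).
  by rewrite -expnMn; case: (k - 1) => // e; rewrite leq_exp2r //; lia.
rewrite [_ * (_ * _)]mulnC leq_mul2r -mulnAC leq_mul2r.
by rewrite le_pow !orbT.
Qed.
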